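(* For all integers $n,m\ge 1$, letting $K_{n,m}$ be the complete bipartite graph with parts of sizes $n$ and $m$: ${\rm I}_e(K_{n,m})=0$ if $n\ne m$, and ${\rm I}_e(K_{n,n})=n$.
   Context: All graphs are finite and simple. A graph is locally irregular if no two adjacent vertices have the same degree. An edge-irregulator of a graph $G$ is a set $S\subseteq E(G)$ such that $G-S$ is locally irregular; ${\rm I}_e(G)$ is the minimum cardinality of an edge-irregulator of $G$. *)

From mathcomp Require Import all_boot.
Set Implicit Arguments. Unset Strict Implicit. Unset Printing Implicit Defensive.

Section Graphs.
Variable V : finType.

Definition simple_graph (adj : rel V) : Prop :=
  (forall x y, adj x y = adj y x) /\ (forall x, ~~ adj x x).

Definition edges (adj : rel V) : {set {set V}} :=
  [set [set x; y] | x in V, y in V & adj x y].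

Definition del_edges (adj : rel V) (S : {set {set V}}) : rel V :=
  fun x y => adj x y && ([set x; y] \notin S).

Definition deg (adj : rel V) (x : V) : nat := #|[set y | adj x y]|.

Definition locally_irregular (adj : rel V) : Prop :=
  forall x y, adj x y -> deg adj x <> deg adj y.

Definition locally_irregularb (adj : rel V) : bool :=
  [forall x, forall y, adj x y ==> (deg adj x != deg adj y)].

Definition edge_irregulator (adj : rel V) (S : {set {set V}}) : Prop :=
  S \subset edges adj /\ locally_irregular (del_edges adj S).

(* I_e(G): minimum cardinality of an edge-irregulator (the full edge set
   is always one, so the default value #|edges adj| is never spurious). *)
Definition Ie (adj : rel V) : nat :=
  \big[minn/#|edges adj|]_(S in powerset (edges adj)
        | locally_irregularb (del_edges adj S)) #|S|.
End Graphs.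

Definition Kbip (n m : nat) : rel ('I_n + 'I_m) :=
  fun x y => match x, y with
             | inl _, inr _ | inr _, inl _ => true
             | _, _ => false
             end.
Arguments Kbip : clear implicits.

From HB Require Import structures.
From mathcomp Require Import all_boot.
Set Implicit Arguments. Unset Strict Implicit. Unset Printing Implicit Defensive.

(* In K_{n,m} every edge joins a vertex of degree m to one of degree n, so for
   n <> m no edge needs to be deleted.  In K_{n,n}, if some left vertex a and
   some right vertex b both keep all their edges, the edge ab survives with
   degree n at both ends; hence an irregulator meets every vertex of one side,
   and its edges at distinct vertices of that side are distinct, so it has at
   least n edges.  Deleting the n edges at one left vertex a0 is enough: the
   other left vertices keep degree n, the right ones drop to n - 1. *)

(* Lets [bigD1] pick one term out of the minimum that defines [Ie]. *)
HB.instance Definition _ := SemiGroup.isComLaw.Build nat minn minnA minnC.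

Lemma locally_irregularP (V : finType) (adj : rel V) :
  reflect (locally_irregular adj) (locally_irregularb adj).
Proof.
apply: (iffP forallP) => [irr x y xy | irr x].
  by move: (irr x) => /forallP /(_ y) /implyP /(_ xy) /eqP.
by apply/forallP => y; apply/implyP => xy; apply/eqP; apply: irr.
Qed.

Section Irregulators.
Variables (V : finType) (adj : rel V).

Lemma mem_edges x y : adj x y -> [set x; y] \in edges adj.
Proof. by move=> xy; apply/imset2P; exists x y; rewrite ?inE. Qed.

Lemma Ie_leq S : edge_irregulator adj S -> Ie adj <= #|S|.
Proof.
case=> sSE irrS; rewrite /Ie (bigD1 S) ?geq_minl //=.
by rewrite powersetE sSE; apply/locally_irregularP.
Qed.

Lemma leq_Ie k :
  (forall S, edge_irregulator adj S -> k <= #|S|) -> k <= Ie adj.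
Proof.
move=> irr_ge; rewrite /Ie; apply: (big_ind (leq k)).
- by apply: irr_ge; split=> // x y /andP[/mem_edges ->].
- by move=> p q kp kq; rewrite leq_min kp kq.
- move=> S /andP[]; rewrite powersetE => sSE /locally_irregularP irrS.
  exact: irr_ge.
Qed.

Lemma Ie_eq0 : locally_irregular (del_edges adj set0) -> Ie adj = 0.
Proof.
move=> irr; have := Ie_leq (conj (sub0set (edges adj)) irr).
by rewrite cards0 leqn0 => /eqP.
Qed.

End Irregulators.

Section CompleteBipartite.
Variables n m : nat.
Local Notation V := ('I_n + 'I_m)%type.
Local Notation K := (Kbip n m).

Lemma Kbip_pair_inj (a a' : 'I_n) (b b' : 'I_m) :
  [set inl a; inr b] = [set inl a'; inr b'] :> {set V} -> a = a' /\ b = b'.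
Proof.
move=> e; have /set2P[[]|//] : inl a \in [set inl a'; inr b'] by rewrite -e set21.
by have /set2P[//|[]] : inr b \in [set inl a'; inr b'] by rewrite -e set22.
Qed.

Lemma deg_Kbip_inl (S : {set {set V}}) a :
  deg (del_edges K S) (inl a) = #|[set b | [set inl a; inr b] \notin S]|.
Proof.
rewrite /deg -(card_imset _ (@inr_inj 'I_n 'I_m)).
apply: eq_card => -[c|c]; rewrite !inE /del_edges /=.
  by apply/esym/imsetP => -[].
by rewrite mem_imset ?inE //; exact: inr_inj.
Qed.

Lemma deg_Kbip_inr (S : {set {set V}}) b :
  deg (del_edges K S) (inr b) = #|[set a | [set inl a; inr b] \notin S]|.
Proof.
rewrite /deg -(card_imset _ (@inl_inj 'I_n 'I_m)).
apply: eq_card => -[c|c]; rewrite !inE /del_edges /=.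
  by rewrite mem_imset ?inE 1?setUC //; exact: inl_inj.
by apply/esym/imsetP => -[].
Qed.

Lemma deg_Kbip_inl_full (S : {set {set V}}) a :
  (forall b, [set inl a; inr b] \notin S) -> deg (del_edges K S) (inl a) = m.
Proof.
move=> a_free; rewrite deg_Kbip_inl -[RHS]card_ord.
by apply: eq_card => b; rewrite inE a_free.
Qed.

Lemma deg_Kbip_inr_full (S : {set {set V}}) b :
  (forall a, [set inl a; inr b] \notin S) -> deg (del_edges K S) (inr b) = n.
Proof.
move=> b_free; rewrite deg_Kbip_inr -[RHS]card_ord.
by apply: eq_card => a; rewrite inE b_free.
Qed.

Lemma Kbip_locally_irregular : n <> m -> locally_irregular (del_edges K set0).
Proof.
have no_edge (X : {set V}) : X \notin set0 by rewrite in_set0.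
move=> nm [a|b] [a'|b'] //= _; rewrite (deg_Kbip_inl_full (fun _ => no_edge _)).
  by rewrite (deg_Kbip_inr_full (fun _ => no_edge _)); apply: nesym.
by rewrite (deg_Kbip_inr_full (fun _ => no_edge _)).
Qed.

Lemma leq_card_cover_inl (S : {set {set V}}) :
  (forall a, exists b, [set inl a; inr b] \in S) -> n <= #|S|.
Proof.
case/fin_all_exists=> f Sf; pose e a : {set V} := [set inl a; inr (f a)].
have inj_e : injective e by move=> a a' /Kbip_pair_inj[].
apply: leq_trans (subset_leq_card (_ : e @: [set: 'I_n] \subset S)).
  by rewrite card_imset // cardsT card_ord.
by apply/subsetP => _ /imsetP[a _ ->]; apply: Sf.
Qed.

Lemma leq_card_cover_inr (S : {set {set V}}) :
  (forall b, exists a, [set inl a; inr b] \in S) -> m <= #|S|.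
Proof.
case/fin_all_exists=> f Sf; pose e b : {set V} := [set inl (f b); inr b].
have inj_e : injective e by move=> b b' /Kbip_pair_inj[].
apply: leq_trans (subset_leq_card (_ : e @: [set: 'I_m] \subset S)).
  by rewrite card_imset // cardsT card_ord.
by apply/subsetP => _ /imsetP[b _ ->]; apply: Sf.
Qed.

End CompleteBipartite.

Lemma leq_card_irregulator_Kbipnn n (S : {set {set 'I_n + 'I_n}}) :
  locally_irregular (del_edges (Kbip n n) S) -> n <= #|S|.
Proof.
move=> irr.
have [left_cover|] := boolP [forall a, exists b, [set inl a; inr b] \in S].
  by apply: leq_card_cover_inl => a; apply/existsP/(forallP left_cover).
rewrite negb_forall => /existsP[a]; rewrite negb_exists => /forallP a_free.
have [right_cover|] := boolP [forall b, exists a, [set inl a; inr b] \in S].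
  by apply: leq_card_cover_inr => b; apply/existsP/(forallP right_cover).
rewrite negb_forall => /existsP[b]; rewrite negb_exists => /forallP b_free.
case: (irr (inl a) (inr b)); first by rewrite /del_edges /= a_free.
by rewrite deg_Kbip_inl_full ?deg_Kbip_inr_full.
Qed.

Lemma Ie_Kbipnn_leq n : 0 < n -> Ie (Kbip n n) <= n.
Proof.
move=> n_gt0; pose a0 := Ordinal n_gt0.
pose star : {set {set 'I_n + 'I_n}} := [set [set inl a0; inr b] | b : 'I_n].
have star_pair a b : ([set inl a; inr b] \in star) = (a == a0).
  by apply/imsetP/eqP => [[b' _ /Kbip_pair_inj[]] // | ->]; exists b.
have card_star : #|star| = n.
  by rewrite card_imset ?cardsT ?card_ord // => b b' /Kbip_pair_inj[].
suff /Ie_leq : edge_irregulator (Kbip n n) star by rewrite card_star.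
split; first by apply/subsetP => _ /imsetP[b _ ->]; apply: mem_edges.
have deg_inl a : a != a0 -> deg (del_edges (Kbip n n) star) (inl a) = n.
  by move=> a_a0; apply: deg_Kbip_inl_full => b; rewrite star_pair.
have deg_inr b : deg (del_edges (Kbip n n) star) (inr b) = n.-1.
  rewrite deg_Kbip_inr -[in RHS](card_ord n) -(cardsC1 a0).
  by apply: eq_card => a; rewrite !inE star_pair.
have pred_neq : n.-1 <> n by apply/eqP; rewrite ltn_eqF // ltn_predL.
move=> [a|b] [a'|b'] //; rewrite /del_edges /= ?[[set inr _; _]]setUC star_pair.
  by move=> /deg_inl ->; rewrite deg_inr; apply: nesym.
by move=> /deg_inl ->; rewrite deg_inr.
Qed.

Theorem theorem5 (n m : nat) : (1 <= n)%N -> (1 <= m)%N ->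
  (n <> m -> Ie (Kbip n m) = 0%N) /\ Ie (Kbip n n) = n.
Proof.
move=> n_gt0 _; split=> [nm|]; first exact/Ie_eq0/Kbip_locally_irregular.
apply/eqP; rewrite eqn_leq Ie_Kbipnn_leq //.
by apply: leq_Ie => S [_]; apply: leq_card_irregulator_Kbipnn.
Qed.
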